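(* Let $(E,\mathscr{T},\le)$ be a locally compact $T_2$-preordered Tychonoff space such that $G(\le)=\bigcap_{f\in\mathcal{F}}G_f$, and let $\mathcal{H}\subseteq\mathcal{F}$ with $G(\le)=\bigcap_{h\in\mathcal{H}}G_h$. Let $c:E\to cE$ be the $\mathcal{H}$-compactification. Then the remainder $cE\setminus c(E)$, endowed with the preorder induced from $\le_c$, is a $T_2$-ordered space (in particular $\le_c$ restricted to the remainder is antisymmetric).
   Context: $T_2$-preordered: the graph $G(\le)=\{(x,y):x\le y\}$ is closed in $E\times E$; $T_2$-ordered: additionally antisymmetric. $\mathcal{F}$ is the family of continuous isotone ($x\le y\Rightarrow f(x)\le f(y)$) functions $f:E\to[0,1]$; $G_f=\{(x,y):f(x)\le f(y)\}$. $\mathcal{C}$ is the family of continuous functions $E\to[0,1]$ that are constant outside some compact set. For $\mathcal{H}\subseteq\mathcal{F}$ with $G(\le)=\bigcap_{h\in\mathcal{H}}G_h$, the $\mathcal{H}$-compactification is the map $c:E\to[0,1]^{\mathcal{H}\cup\mathcal{C}}$, $c(x)=(g(x))_{g\in\mathcal{H}\cup\mathcal{C}}$, with $cE$ the closure of $c(E)$ in the product topology, $\mathscr{T}_c$ the induced topology, and $\le_c$ the restriction to $cE$ of the preorder $x\preceq y$ iff $x_h\le y_h$ for all $h\in\mathcal{H}$. *)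

From HB Require Import structures.
From mathcomp Require Import all_boot all_order all_algebra.
From mathcomp Require Import all_classical all_reals all_analysis.
Import Order.TTheory GRing.Theory Num.Theory.
Import numFieldTopology.Exports numFieldNormedType.Exports.
Local Open Scope classical_set_scope.
Local Open Scope ring_scope.

Unset Implicit Arguments.
Unset Strict Implicit.
Unset Printing Implicit Defensive.

Definition graph_rel (T : Type) (le : T -> T -> Prop) : set (T * T) :=
  [set xy | le xy.1 xy.2].

Section Defs.
Variables (R : realType) (E : topologicalType).

Definition graph_fun (T : Type) (f : T -> R) : set (T * T) :=
  [set xy | f xy.1 <= f xy.2].

Definition is_preorder (T : Type) (le : T -> T -> Prop) :=
  (forall x, le x x) /\ (forall x y z, le x y -> le y z -> le x z).

Definition tychonoff_space (T : topologicalType) :=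
  hausdorff_space T /\ completely_regular_space T.

Definition isotone01 (le : E -> E -> Prop) : set (E -> R) :=
  [set f : E -> R | continuous f /\ (forall x, 0 <= f x <= 1) /\
           (forall x y, le x y -> f x <= f y)].

Definition cc01 : set (E -> R) :=
  [set g : E -> R | continuous g /\ (forall x, 0 <= g x <= 1) /\
     exists K : set E, compact K /\ exists a : R, forall x, ~ K x -> g x = a].

Definition hc_index (H : set (E -> R)) := {g : E -> R | (H `|` cc01) g}.

(* the H-compactification map c : E -> [0,1]^(H ∪ C) (product topology);
   values lie in [0,1], we take the ambient product R^(H ∪ C) whose
   closed subset [0,1]^(H ∪ C) contains the closure of c(E) *)
Definition hcspace (H : set (E -> R)) := {ptws (hc_index H) -> R}.

Definition hcomp (H : set (E -> R)) (x : E) : hcspace H :=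
  fun i : hc_index H => sval i x.

Definition hcompE (H : set (E -> R)) : set (hcspace H) :=
  closure (range (hcomp H)).

Definition remainder (H : set (E -> R)) : set (hcspace H) :=
  hcompE H `\` range (hcomp H).

Definition le_c (H : set (E -> R)) (p q : hcspace H) : Prop :=
  forall i : hc_index H, H (sval i) -> p i <= q i.

End Defs.

Definition T2_ordered_subspace (T : topologicalType) (A : set T)
    (le : T -> T -> Prop) : Prop :=
  [/\ (forall x, A x -> le x x),
      (forall x y z, A x -> A y -> A z -> le x y -> le y z -> le x z),
      (forall x y, A x -> A y -> le x y -> le y x -> x = y) &
      closure (graph_rel T le `&` (A `*` A)) `&` (A `*` A) `<=` graph_rel T le].

From HB Require Import structures.
From mathcomp Require Import all_boot all_order all_algebra.
From mathcomp Require Import all_classical all_reals all_analysis.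
Import Order.TTheory GRing.Theory Num.Theory.
Import numFieldTopology.Exports numFieldNormedType.Exports.
Local Open Scope classical_set_scope.
Local Open Scope ring_scope.

(* A point p of the remainder is a limit of points c x with x escaping every
   compact set: otherwise the traces on E of the neighbourhoods of p form a
   proper filter containing a compact set, and any cluster point x of it has
   c x = p.  Hence each C-coordinate g of p is the constant value of g outside
   its compact set, so p is determined by its H-coordinates and <=_c is
   antisymmetric on the remainder.  The graph of <=_c is closed, being an
   intersection of the closed sets {(p, q) | p_h <= q_h}. *)

Lemma continuous_ptws (I : Type) (E T : topologicalType) (f : E -> {ptws I -> T}) :
  (forall i, continuous (fun x => f x i)) -> continuous f.
Proof.
move=> fc x; apply/cvg_sup => i.
exact: (continuous_comp_initial (w := fun g : {ptws I -> T} => g i) (fc i)).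
Qed.

Section pointwise_order.
Variables (R : realType) (I : eqType).

Lemma closed_coord_le (i : I) :
  closed [set pq : {ptws I -> R} * {ptws I -> R} | pq.1 i <= pq.2 i].
Proof.
have -> : [set pq : {ptws I -> R} * {ptws I -> R} | pq.1 i <= pq.2 i] =
    (fun pq => pq.2 i - pq.1 i) @^-1` [set r | 0 <= r].
  by apply/seteqP; split => pq /=; rewrite subr_ge0.
apply: preimage_closed; last exact: closed_ge.
move=> pq _.
have ci : continuous (fun f : {ptws I -> R} => f i) := @proj_continuous _ _ i.
have c1 : continuous (fun pq : {ptws I -> R} * {ptws I -> R} => pq.1 i).
  by move=> z; exact: (continuous_comp (f := fst) cvg_fst (ci _)).
have c2 : continuous (fun pq : {ptws I -> R} * {ptws I -> R} => pq.2 i).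
  by move=> z; exact: (continuous_comp (f := snd) cvg_snd (ci _)).
exact: (@continuousB R R^o _ _ _ pq (c2 pq) (c1 pq)).
Qed.

Lemma closed_coordwise_le (J : set I) :
  closed [set pq : {ptws I -> R} * {ptws I -> R} |
          forall i, J i -> pq.1 i <= pq.2 i].
Proof. apply: (closed_bigI (D := J)) => i _; exact: closed_coord_le. Qed.

End pointwise_order.

Lemma remainder_escapes_compact {E T : topologicalType} {c : E -> T}
    {K : set E} {p : T} {U : set T} :
  hausdorff_space T -> continuous c -> compact K ->
  closure (range c) p -> ~ range c p ->
  nbhs p U -> exists2 x, ~ K x & U (c x).
Proof.
move=> hT cc cK clp nrp pU; apply: contrapT => noesc.
have UK : c @^-1` U `<=` K.
  by move=> x Ux; apply: contrapT => nKx; apply: noesc; exists x.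
pose F := filter_from (nbhs p) (preimage c).
have FF : Filter F.
  apply: filter_from_filter; first by exists setT; exact: filterT.
  by move=> V W pV pW; exists (V `&` W); [exact: filterI|].
have PF : ProperFilter F.
  by apply: filter_from_proper => V /clp [_ [[x _ <-] Vcx]]; exists x.
have [x [Kx clx]] := cK F PF (ex_intro2 _ _ U pU UK).
apply: nrp; exists x => //; apply: hT => A B cxA pB.
have FB : F (c @^-1` B) by exists B.
have [y [By Ay]] := clx _ _ FB (cc x A cxA).
by exists (c y).
Qed.

Lemma remainder_coord_eq {R : realType} {I : eqType} {E : topologicalType}
    {c : E -> {ptws I -> R}} {K : set E} {i : I} {a : R} {p : {ptws I -> R}} :
  continuous c -> compact K -> (forall x, ~ K x -> c x i = a) ->
  closure (range c) p -> ~ range c p -> p i = a.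
Proof.
move=> cc cK cKa clp nrp; apply: contrapT => pia.
have e0 : 0 < `|p i - a| by rewrite normr_gt0 subr_eq0; apply/eqP.
have pU : nbhs p [set q : {ptws I -> R} | `|p i - q i| < `|p i - a|].
  exact: (@proj_continuous _ _ i p _ (nbhsx_ballx (p i) _ e0)).
have hsdf : hausdorff_space {ptws I -> R}.
  exact: (@hausdorff_product I (fun=> R) (fun=> @Rhausdorff R)).
have [x nKx] := remainder_escapes_compact hsdf cc cK clp nrp pU.
by rewrite /= cKa // ltxx.
Qed.

Section H_compactification.
Variables (R : realType) (E : topologicalType) (H : set (E -> R)).
Hypothesis H_continuous : forall h, H h -> continuous h.

HB.instance Definition _ := gen_eqMixin (hc_index R E H).

Lemma hcomp_continuous : continuous (hcomp R E H).
Proof.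
apply: continuous_ptws => -[g /= [/H_continuous //|[]//]].
Qed.

Lemma remainder_le_c_antisym (p q : hcspace R E H) :
  remainder R E H p -> remainder R E H q ->
  le_c R E H p q -> le_c R E H q p -> p = q.
Proof.
move=> [clp nrp] [clq nrq] pq qp; apply: functional_extensionality_dep => i.
have [Hi|[_ [_ [K [cK [a Ka]]]]]] := svalP i.
  by apply/eqP; rewrite eq_le pq // qp.
by rewrite (remainder_coord_eq hcomp_continuous cK Ka clp nrp)
           (remainder_coord_eq hcomp_continuous cK Ka clq nrq).
Qed.

Lemma closed_graph_le_c : closed (graph_rel (hcspace R E H) (le_c R E H)).
Proof. exact: (closed_coordwise_le R _ (fun i : hc_index R E H => H (sval i))). Qed.

End H_compactification.

Theorem mainTheorem11 (R : realType) (E : topologicalType)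
  (le : E -> E -> Prop) (H : set (E -> R)) :
  locally_compact [set: E] ->
  tychonoff_space E ->
  is_preorder E le ->
  closed (graph_rel E le) ->
  graph_rel E le = \bigcap_(f in isotone01 R E le) graph_fun R E f ->
  H `<=` isotone01 R E le ->
  graph_rel E le = \bigcap_(h in H) graph_fun R E h ->
  T2_ordered_subspace (hcspace R E H) (remainder R E H) (le_c R E H).
Proof.
move=> _ _ _ _ _ HF _.
have H_continuous h : H h -> continuous h by move=> /HF[].
split.
- by move=> p _ i _.
- by move=> p q r _ _ _ pq qr i Hi; exact: le_trans (pq i Hi) (qr i Hi).
- exact: remainder_le_c_antisym.
- move=> pq [clpq _]; apply: closed_graph_le_c.
  by apply: closureS clpq; exact: subIsetl.
Qed.
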